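(* The assignment $\max:\underline{\mathrm{IN}}\to\underline{\mathrm{G}}$ sending an interval domain $(D,\mathrm{left},\mathrm{right})$ to $(\max(D),\le)$ and an arrow $f:D\to E$ to its restriction $f|_{\max(D)}:\max(D)\to\max(E)$ is a functor.
   Context: Order notions: directed/filtered sets, suprema $\bigsqcup$, infima $\bigwedge$, the way-below relation $x\ll y$ (for every directed $S$ with a supremum, $y\sqsubseteq\bigsqcup S$ implies $x\sqsubseteq s$ for some $s\in S$), $\Uparrow x=\{a:x\ll a\}$, $\Downarrow x=\{a:a\ll x\}$; a poset is continuous if some subset $B$ has $B\cap\Downarrow x$ containing a directed set with supremum $x$ for every $x$; a continuous dcpo additionally has suprema of all directed sets; $\max(D)$ is the set of maximal elements; the Scott topology consists of upper sets $U$ with $\bigsqcup S\in U\Rightarrow S\cap U\neq\emptyset$ for directed $S$. A continuous poset is bicontinuous if (1) $x\ll y$ iff for every filtered $S$ with an infimum, $\bigwedge S\sqsubseteq x$ implies $s\sqsubseteq y$ for some $s\in S$, and (2) each $\Uparrow x$ is filtered with infimum $x$; its interval topology has basis $\{z: a\ll z\ll b\}$. A globally hyperbolic poset is a bicontinuous poset $(X,\le)$ whose closed intervals $[a,b]=\{z:a\le z\le b\}$ are compact in the interval topology. $\underline{\mathrm{G}}$ is the category whose objects are globally hyperbolic posets and whose arrows are monotone maps continuous for the interval topologies. An interval poset is a poset $D$ with maps $\mathrm{left},\mathrm{right}:D\to\max(D)$ such that (writing $\sqcap$ for binary infimum, assumed to exist only where named) $x=\mathrm{left}(x)\sqcap\mathrm{right}(x)$;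 if $\mathrm{right}(x)=\mathrm{left}(y)$ then $\mathrm{left}(x\sqcap y)=\mathrm{left}(x)$, $\mathrm{right}(x\sqcap y)=\mathrm{right}(y)$; and for $p\in\max(D)$ with $x\sqsubseteq p$, $\mathrm{left}(\mathrm{left}(x)\sqcap p)=\mathrm{left}(x)$, $\mathrm{right}(\mathrm{left}(x)\sqcap p)=p$, $\mathrm{left}(p\sqcap\mathrm{right}(x))=p$, $\mathrm{right}(p\sqcap\mathrm{right}(x))=\mathrm{right}(x)$. Define $a\le b$ on $\max(D)$ iff $a=\mathrm{left}(z),b=\mathrm{right}(z)$ for some $z$; let $[p,\cdot]=\mathrm{left}^{-1}(p)$, $[\cdot,q]=\mathrm{right}^{-1}(q)$. An interval domain is an interval poset with $D$ a continuous dcpo such that: (i) if $p\in\Uparrow x\cap\max(D)$ then $\Uparrow(\mathrm{left}(x)\sqcap p)$ and $\Uparrow(p\sqcap\mathrm{right}(x))$ are nonempty; (ii) for each $x$, TFAE: $\Uparrow x\neq\emptyset$; for all $y\in[\mathrm{left}(x),\cdot]$ with $y\sqsubseteq x$, $y\ll\mathrm{right}(y)$ in the subposet $[\cdot,\mathrm{right}(y)]$; for all $y\in[\cdot,\mathrm{right}(x)]$ with $y\sqsubseteq x$, $y\ll\mathrm{left}(y)$ in the subposet $[\mathrm{left}(y),\cdot]$; (iii) for directed $S\subseteq[p,\cdot]$, $\mathrm{left}(\bigsqcup S)=p$ and $\mathrm{right}(\bigsqcup S)=\mathrm{right}(\bigsqcup T)$ for every directed $T\subseteq[q,\cdot]$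 with $\mathrm{right}(T)=\mathrm{right}(S)$, and dually for directed $S\subseteq[\cdot,q]$, $\mathrm{right}(\bigsqcup S)=q$ and $\mathrm{left}(\bigsqcup S)=\mathrm{left}(\bigsqcup T)$ for every directed $T\subseteq[\cdot,p]$ with $\mathrm{left}(T)=\mathrm{left}(S)$; (iv) each $\{y\in\max(D):x\sqsubseteq y\}$ is Scott compact. $\underline{\mathrm{IN}}$ is the category of interval domains with arrows the Scott continuous maps $f:D\to E$ satisfying $f\circ\mathrm{left}_D=\mathrm{left}_E\circ f$ and $f\circ\mathrm{right}_D=\mathrm{right}_E\circ f$. *)

From Stdlib Require Import List.

Definition poset {T : Type} (le : T -> T -> Prop) : Prop :=
  (forall x, le x x) /\
  (forall x y, le x y -> le y x -> x = y) /\
  (forall x y z, le x y -> le y z -> le x z).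

Definition directed {T : Type} (le : T -> T -> Prop) (S : T -> Prop) : Prop :=
  (exists x, S x) /\
  (forall x y, S x -> S y -> exists z, S z /\ le x z /\ le y z).

Definition filtered {T : Type} (le : T -> T -> Prop) (S : T -> Prop) : Prop :=
  (exists x, S x) /\
  (forall x y, S x -> S y -> exists z, S z /\ le z x /\ le z y).

Definition is_sup {T : Type} (le : T -> T -> Prop) (S : T -> Prop) (u : T) : Prop :=
  (forall s, S s -> le s u) /\
  (forall v, (forall s, S s -> le s v) -> le u v).

Definition is_inf {T : Type} (le : T -> T -> Prop) (S : T -> Prop) (u : T) : Prop :=
  (forall s, S s -> le u s) /\
  (forall v, (forall s, S s -> le v s) -> le v u).

Definition is_meet {T : Type} (le : T -> T -> Prop) (x y m : T) : Prop :=
  is_inf le (fun z => z = x \/ z = y) m.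

Definition way_below {T : Type} (le : T -> T -> Prop) (x y : T) : Prop :=
  forall (S : T -> Prop) (u : T), directed le S -> is_sup le S u -> le y u ->
    exists s, S s /\ le x s.

Definition is_sup_in {T : Type} (P : T -> Prop) (le : T -> T -> Prop)
    (S : T -> Prop) (u : T) : Prop :=
  P u /\ (forall s, S s -> le s u) /\
  (forall v, P v -> (forall s, S s -> le s v) -> le u v).

Definition way_below_in {T : Type} (P : T -> Prop) (le : T -> T -> Prop)
    (x y : T) : Prop :=
  forall (S : T -> Prop) (u : T), (forall s, S s -> P s) -> directed le S ->
    is_sup_in P le S u -> le y u -> exists s, S s /\ le x s.

Definition uuarrow {T : Type} (le : T -> T -> Prop) (x : T) : T -> Prop :=
  fun a => way_below le x a.

Definition continuous_poset {T : Type} (le : T -> T -> Prop) : Prop :=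
  poset le /\
  exists B : T -> Prop, forall x, exists S : T -> Prop,
    (forall s, S s -> B s /\ way_below le s x) /\ directed le S /\ is_sup le S x.

Definition dcpo {T : Type} (le : T -> T -> Prop) : Prop :=
  forall S, directed le S -> exists u, is_sup le S u.

Definition continuous_dcpo {T : Type} (le : T -> T -> Prop) : Prop :=
  continuous_poset le /\ dcpo le.

Definition is_max {T : Type} (le : T -> T -> Prop) (x : T) : Prop :=
  forall y, le x y -> y = x.

Definition scott_open {T : Type} (le : T -> T -> Prop) (U : T -> Prop) : Prop :=
  (forall x y, U x -> le x y -> U y) /\
  (forall S u, directed le S -> is_sup le S u -> U u -> exists s, S s /\ U s).

Definition compact_in {T : Type} (opn : (T -> Prop) -> Prop) (K : T -> Prop) : Prop :=
  forall (I : Type) (U : I -> T -> Prop),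
    (forall i, opn (U i)) ->
    (forall x, K x -> exists i, U i x) ->
    exists l : list I, forall x, K x -> exists i, In i l /\ U i x.

Definition continuous_map {A B : Type} (opnA : (A -> Prop) -> Prop)
    (opnB : (B -> Prop) -> Prop) (f : A -> B) : Prop :=
  forall V, opnB V -> opnA (fun x => V (f x)).

Definition monotone {A B : Type} (leA : A -> A -> Prop) (leB : B -> B -> Prop)
    (f : A -> B) : Prop :=
  forall x y, leA x y -> leB (f x) (f y).

Definition bicontinuous {T : Type} (le : T -> T -> Prop) : Prop :=
  continuous_poset le /\
  (forall x y, way_below le x y <->
     (forall S u, filtered le S -> is_inf le S u -> le u x ->
        exists s, S s /\ le s y)) /\
  (forall x, filtered le (uuarrow le x) /\ is_inf le (uuarrow le x) x).

(** interval topology: open sets are unions of basic sets {z : a ≪ z ≪ b} *)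
Definition interval_open {T : Type} (le : T -> T -> Prop) (U : T -> Prop) : Prop :=
  forall z, U z -> exists a b, way_below le a z /\ way_below le z b /\
    (forall w, way_below le a w -> way_below le w b -> U w).

Definition globally_hyperbolic {T : Type} (le : T -> T -> Prop) : Prop :=
  bicontinuous le /\
  forall a b, compact_in (interval_open le) (fun z => le a z /\ le z b).

Definition G_arrow {A B : Type} (leA : A -> A -> Prop) (leB : B -> B -> Prop)
    (f : A -> B) : Prop :=
  monotone leA leB f /\ continuous_map (interval_open leA) (interval_open leB) f.

Definition interval_poset {T : Type} (le : T -> T -> Prop) (left right : T -> T) : Prop :=
  poset le /\
  (forall x, is_max le (left x) /\ is_max le (right x)) /\
  (forall x, is_meet le (left x) (right x) x) /\
  (forall x y, right x = left y ->
     exists m, is_meet le x y m /\ left m = left x /\ right m = right y) /\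
  (forall x p, is_max le p -> le x p ->
     (exists m, is_meet le (left x) p m /\ left m = left x /\ right m = p) /\
     (exists m, is_meet le p (right x) m /\ left m = p /\ right m = right x)).

Definition interval_domain {T : Type} (le : T -> T -> Prop) (left right : T -> T) : Prop :=
  interval_poset le left right /\
  continuous_dcpo le /\
  (* (i) *)
  (forall x p, is_max le p -> way_below le x p ->
     (forall m, is_meet le (left x) p m -> exists a, way_below le m a) /\
     (forall m, is_meet le p (right x) m -> exists a, way_below le m a)) /\
  (* (ii) *)
  (forall x,
     let A := exists a, way_below le x a in
     let B := forall y, left y = left x -> le y x ->
                way_below_in (fun z => right z = right y) le y (right y) in
     let C := forall y, right y = right x -> le y x ->
                way_below_in (fun z => left z = left y) le y (left y) in
     (A <-> B) /\ (A <-> C)) /\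
  (* (iii) *)
  (forall p (S : T -> Prop) u, directed le S -> (forall s, S s -> left s = p) ->
     is_sup le S u ->
     left u = p /\
     (forall q (S' : T -> Prop) u', directed le S' -> (forall t, S' t -> left t = q) ->
        (forall z, (exists t, S' t /\ right t = z) <-> (exists s, S s /\ right s = z)) ->
        is_sup le S' u' -> right u = right u')) /\
  (forall q (S : T -> Prop) u, directed le S -> (forall s, S s -> right s = q) ->
     is_sup le S u ->
     right u = q /\
     (forall p (S' : T -> Prop) u', directed le S' -> (forall t, S' t -> right t = p) ->
        (forall z, (exists t, S' t /\ left t = z) <-> (exists s, S s /\ left s = z)) ->
        is_sup le S' u' -> left u = left u')) /\
  (* (iv) *)
  (forall x, compact_in (scott_open le) (fun y => is_max le y /\ le x y)).

Record IntervalDomain : Type := {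
  idT :> Type;
  idle : idT -> idT -> Prop;
  idleft : idT -> idT;
  idright : idT -> idT;
  id_ax : interval_domain idle idleft idright
}.

Definition IN_arrow (D E : IntervalDomain) (f : D -> E) : Prop :=
  continuous_map (scott_open (idle D)) (scott_open (idle E)) f /\
  (forall x, f (idleft D x) = idleft E (f x)) /\
  (forall x, f (idright D x) = idright E (f x)).

Definition maxD (D : IntervalDomain) : Type := { x : D | is_max (idle D) x }.

Definition maxle (D : IntervalDomain) (a b : maxD D) : Prop :=
  exists z : D, proj1_sig a = idleft D z /\ proj1_sig b = idright D z.

Definition restr {D E : IntervalDomain} (f : D -> E)
    (Hm : forall x, is_max (idle D) x -> is_max (idle E) (f x)) (a : maxD D) : maxD E :=
  exist _ (f (proj1_sig a)) (Hm (proj1_sig a) (proj2_sig a)).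

(* An interval domain D is, up to isomorphism, the set of pairs a <= b of maximal
   elements ordered by reverse inclusion: x ⊑ y iff left x <= left y and
   right y <= right x.  By axiom (iii), directed suprema of intervals with a common
   right endpoint compute suprema in max(D), and axiom (ii) then says that a ≪ b in
   max(D) exactly when the interval [a, b] has an element way above it in D.  This
   condition is symmetric in left and right, so applying the theory to the mirror
   domain (left and right exchanged) yields bicontinuity.  For the topology, the
   elements of D whose endpoints lie way inside a basic subset of an interval-open U
   form a Scott-open set meeting max(D) in U.  This turns interval-open covers of
   [a, b] into Scott-open covers of the maximal elements above [a, b], compact by
   (iv), and shows that restrictions of Scott-continuous maps are interval-continuous. *)

From Stdlib Require Import Classical FunctionalExtensionality PropExtensionality ProofIrrelevance.

Section PosetFacts.
Context {X : Type} {R : X -> X -> Prop} (HR : poset R).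

Lemma poset_refl x : R x x.
Proof. exact (proj1 HR x). Qed.

Lemma poset_antisym x y : R x y -> R y x -> x = y.
Proof. exact (proj1 (proj2 HR) x y). Qed.

Lemma poset_trans x y z : R x y -> R y z -> R x z.
Proof. exact (proj2 (proj2 HR) x y z). Qed.

Lemma poset_flip : poset (fun a b => R b a).
Proof.
  split; [|split]; intros *.
  - apply poset_refl.
  - intros H1 H2; exact (poset_antisym _ _ H2 H1).
  - intros H1 H2; exact (poset_trans _ _ _ H2 H1).
Qed.

Lemma way_below_le x y : way_below R x y -> R x y.
Proof.
  intros Hxy.
  destruct (Hxy (fun s => s = y) y) as [s [-> Hxs]]; [| | apply poset_refl | exact Hxs].
  - split; [exists y; reflexivity|]. intros a b -> ->. exists y. auto using poset_refl.
  - split; [intros s ->; apply poset_refl | intros v Hv; apply Hv; reflexivity].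
Qed.

Lemma way_below_mono x' x y y' :
  R x' x -> way_below R x y -> R y y' -> way_below R x' y'.
Proof.
  intros Hx Hxy Hy S u Hdir Hsup Hu.
  destruct (Hxy S u Hdir Hsup (poset_trans _ _ _ Hy Hu)) as [s [Hs Hxs]].
  exists s. split; [exact Hs | exact (poset_trans _ _ _ Hx Hxs)].
Qed.

Lemma is_meet_lel {x y m} : is_meet R x y m -> R m x.
Proof. intros H. apply (proj1 H). left; reflexivity. Qed.

Lemma is_meet_ler {x y m} : is_meet R x y m -> R m y.
Proof. intros H. apply (proj1 H). right; reflexivity. Qed.

Lemma is_meet_greatest {x y m v} : is_meet R x y m -> R v x -> R v y -> R v m.
Proof. intros H Hx Hy. apply (proj2 H). intros s [-> | ->]; assumption. Qed.

Lemma is_meet_sym {x y m} : is_meet R x y m -> is_meet R y x m.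
Proof.
  intros [Hlow Hgreat]. split.
  - intros s Hs. apply Hlow. tauto.
  - intros v Hv. apply Hgreat. intros s Hs. apply Hv. tauto.
Qed.

Lemma is_meet_unique {x y m m'} : is_meet R x y m -> is_meet R x y m' -> m = m'.
Proof.
  intros H H'. apply poset_antisym.
  - exact (is_meet_greatest H' (is_meet_lel H) (is_meet_ler H)).
  - exact (is_meet_greatest H (is_meet_lel H') (is_meet_ler H')).
Qed.

Section Continuous.
Hypothesis HC : continuous_poset R.

Lemma way_below_directed x : directed R (fun c => way_below R c x).
Proof.
  destruct HC as [_ [B HB]]. destruct (HB x) as [S [HS [Hdir Hsup]]].
  split.
  - destruct (proj1 Hdir) as [s Hs]. exists s. exact (proj2 (HS s Hs)).
  - intros c1 c2 H1 H2.
    destruct (H1 S x Hdir Hsup (poset_refl x)) as [s1 [Hs1 Hc1]].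
    destruct (H2 S x Hdir Hsup (poset_refl x)) as [s2 [Hs2 Hc2]].
    destruct (proj2 Hdir s1 s2 Hs1 Hs2) as [s [Hs [H1s H2s]]].
    exists s. split; [exact (proj2 (HS s Hs))|].
    split; eapply poset_trans; eassumption.
Qed.

Lemma way_below_sup x : is_sup R (fun c => way_below R c x) x.
Proof.
  destruct HC as [_ [B HB]]. destruct (HB x) as [S [HS [_ Hsup]]].
  split; [exact (fun s => way_below_le s x)|].
  intros v Hv. apply (proj2 Hsup). intros s Hs. exact (Hv s (proj2 (HS s Hs))).
Qed.

(* The elements way below something way below z form a directed set with
   supremum z. *)
Lemma way_below_interpolate {x z} :
  way_below R x z -> exists y, way_below R x y /\ way_below R y z.
Proof.
  intros Hxz.
  set (T := fun c => exists c', way_below R c c' /\ way_below R c' z).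
  assert (Tdir : directed R T).
  { destruct (way_below_directed z) as [[c' Hc'] Hz].
    destruct (proj1 (way_below_directed c')) as [c Hc].
    split; [exists c, c'; auto|].
    intros c1 c2 [c1' [H1 H1']] [c2' [H2 H2']].
    destruct (Hz c1' c2' H1' H2') as [c3' [H3' [H13 H23]]].
    destruct (proj2 (way_below_directed c3') c1 c2)
      as [c3 [H3 [Hc13 Hc23]]].
    - exact (way_below_mono _ _ _ _ (poset_refl _) H1 H13).
    - exact (way_below_mono _ _ _ _ (poset_refl _) H2 H23).
    - exists c3. split; [exists c3'; auto | auto]. }
  assert (Tsup : is_sup R T z).
  { split.
    - intros c [c' [H H']].
      exact (poset_trans _ _ _ (way_below_le _ _ H) (way_below_le _ _ H')).
    - intros v Hv. apply (proj2 (way_below_sup z)). intros c' Hc'.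
      apply (proj2 (way_below_sup c')). intros c Hc. apply Hv. exists c'; auto. }
  destruct (Hxz T z Tdir Tsup (poset_refl z)) as [c [[y [Hcy Hyz]] Hxc]].
  exists y. split; [exact (way_below_mono _ _ _ _ Hxc Hcy (poset_refl y)) | exact Hyz].
Qed.

End Continuous.
End PosetFacts.

Lemma maxD_eq (D : IntervalDomain) (a b : maxD D) : proj1_sig a = proj1_sig b -> a = b.
Proof. apply eq_sig_hprop. intros. apply proof_irrelevance. Qed.

Section IntervalDomainFacts.
Variable D : IntervalDomain.
Local Notation le := (idle D).
Local Notation lf := (idleft D).
Local Notation rt := (idright D).
Local Notation R := (maxle D).

Lemma idle_poset : poset le.
Proof. exact (proj1 (proj1 (id_ax D))). Qed.

Lemma is_max_left x : is_max le (lf x).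
Proof. exact (proj1 (proj1 (proj2 (proj1 (id_ax D))) x)). Qed.

Lemma is_max_right x : is_max le (rt x).
Proof. exact (proj2 (proj1 (proj2 (proj1 (id_ax D))) x)). Qed.

Lemma is_meet_left_right x : is_meet le (lf x) (rt x) x.
Proof. exact (proj1 (proj2 (proj2 (proj1 (id_ax D)))) x). Qed.

Lemma concat_meet x y :
  rt x = lf y -> exists m, is_meet le x y m /\ lf m = lf x /\ rt m = rt y.
Proof. exact (proj1 (proj2 (proj2 (proj2 (proj1 (id_ax D))))) x y). Qed.

Lemma endpoint_meets x p : is_max le p -> le x p ->
  (exists m, is_meet le (lf x) p m /\ lf m = lf x /\ rt m = p) /\
  (exists m, is_meet le p (rt x) m /\ lf m = p /\ rt m = rt x).
Proof. exact (proj2 (proj2 (proj2 (proj2 (proj1 (id_ax D))))) x p). Qed.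

Lemma idle_continuous : continuous_poset le.
Proof. exact (proj1 (proj1 (proj2 (id_ax D)))). Qed.

Lemma idle_dcpo : dcpo le.
Proof. exact (proj2 (proj1 (proj2 (id_ax D)))). Qed.

Lemma left_meet_uuarrow {x p m} : is_max le p -> way_below le x p ->
  is_meet le (lf x) p m -> exists a, way_below le m a.
Proof. intros Hp Hxp. exact (proj1 (proj1 (proj2 (proj2 (id_ax D))) x p Hp Hxp) m). Qed.

Lemma uuarrow_iff_way_below_right x :
  (exists a, way_below le x a) <->
  (forall y, lf y = lf x -> le y x -> way_below_in (fun z => rt z = rt y) le y (rt y)).
Proof. exact (proj1 (proj1 (proj2 (proj2 (proj2 (id_ax D)))) x)). Qed.

Lemma left_sup_of_right_constant {q} {S : D -> Prop} {u} :
  directed le S -> (forall s, S s -> rt s = q) -> is_sup le S u ->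
  rt u = q /\
  (forall p (S' : D -> Prop) u', directed le S' -> (forall t, S' t -> rt t = p) ->
     (forall z, (exists t, S' t /\ lf t = z) <-> (exists s, S s /\ lf s = z)) ->
     is_sup le S' u' -> lf u = lf u').
Proof. exact (proj1 (proj2 (proj2 (proj2 (proj2 (proj2 (id_ax D)))))) q S u). Qed.

Lemma max_above_scott_compact x :
  compact_in (scott_open le) (fun y => is_max le y /\ le x y).
Proof. exact (proj2 (proj2 (proj2 (proj2 (proj2 (proj2 (id_ax D)))))) x). Qed.

Lemma le_left x : le x (lf x).
Proof. exact (is_meet_lel (is_meet_left_right x)). Qed.

Lemma le_right x : le x (rt x).
Proof. exact (is_meet_ler (is_meet_left_right x)). Qed.

Lemma left_max {p} : is_max le p -> lf p = p.
Proof. intros Hp. exact (Hp _ (le_left p)). Qed.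

Lemma right_max {p} : is_max le p -> rt p = p.
Proof. intros Hp. exact (Hp _ (le_right p)). Qed.

Lemma endpoints_inj x y : lf x = lf y -> rt x = rt y -> x = y.
Proof.
  intros Hl Hr. pose proof (is_meet_left_right x) as Hx. rewrite Hl, Hr in Hx.
  exact (is_meet_unique idle_poset Hx (is_meet_left_right y)).
Qed.

Definition maxleft (y : D) : maxD D := exist _ (lf y) (is_max_left y).
Definition maxright (y : D) : maxD D := exist _ (rt y) (is_max_right y).

Lemma maxleft_max (p : maxD D) : maxleft (proj1_sig p) = p.
Proof. apply maxD_eq. exact (left_max (proj2_sig p)). Qed.

Lemma maxright_max (p : maxD D) : maxright (proj1_sig p) = p.
Proof. apply maxD_eq. exact (right_max (proj2_sig p)). Qed.

Lemma maxle_endpoints z : R (maxleft z) (maxright z).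
Proof. exists z. auto. Qed.

Lemma maxle_interval {a b} : R a b -> exists z, a = maxleft z /\ b = maxright z.
Proof. intros [z [Ha Hb]]. exists z. split; apply maxD_eq; assumption. Qed.

Lemma maxle_poset : poset R.
Proof.
  split; [|split].
  - intros p. exists (proj1_sig p).
    split; symmetry; [exact (left_max (proj2_sig p)) | exact (right_max (proj2_sig p))].
  - intros a b [z [Ha Hb]] [w [Hb' Ha']]. apply maxD_eq.
    pose proof (is_meet_left_right z) as Hz. pose proof (is_meet_left_right w) as Hw.
    rewrite <- Ha, <- Hb in Hz. rewrite <- Hb', <- Ha' in Hw.
    rewrite Ha, (is_meet_unique idle_poset Hz (is_meet_sym Hw)). congruence.
  - intros a b c [z [Ha Hb]] [w [Hb' Hc]].
    destruct (concat_meet z w (eq_trans (eq_sym Hb) Hb')) as [m [_ [Hl Hr]]].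
    exists m. split; congruence.
Qed.

Lemma le_max_iff x (p : maxD D) :
  le x (proj1_sig p) <-> R (maxleft x) p /\ R p (maxright x).
Proof.
  split.
  - intros Hxp. destruct (endpoint_meets x _ (proj2_sig p) Hxp)
      as [[m1 [_ [Hl1 Hr1]]] [m2 [_ [Hl2 Hr2]]]].
    split; [exists m1 | exists m2]; simpl; split; congruence.
  - intros [[z1 [Hl1 Hr1]] [z2 [Hl2 Hr2]]]. simpl in *.
    destruct (concat_meet z1 z2 (eq_trans (eq_sym Hr1) Hl2)) as [m [Hm [Hl Hr]]].
    assert (Hmx : m = x) by (apply endpoints_inj; congruence). subst m.
    apply (poset_trans idle_poset _ z1); [exact (is_meet_lel Hm)|].
    rewrite Hr1. apply le_right.
Qed.

Lemma le_iff x y :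
  le x y <-> R (maxleft x) (maxleft y) /\ R (maxright y) (maxright x).
Proof.
  pose proof (maxle_endpoints y) as Hy. split.
  - intros Hxy. split.
    + apply (le_max_iff x (maxleft y)).
      exact (poset_trans idle_poset _ _ _ Hxy (le_left y)).
    + apply (le_max_iff x (maxright y)).
      exact (poset_trans idle_poset _ _ _ Hxy (le_right y)).
  - intros [Hl Hr]. apply (is_meet_greatest (is_meet_left_right y)).
    + apply (le_max_iff x (maxleft y)).
      split; [exact Hl | exact (poset_trans maxle_poset _ _ _ Hy Hr)].
    + apply (le_max_iff x (maxright y)).
      split; [exact (poset_trans maxle_poset _ _ _ Hl Hy) | exact Hr].
Qed.

Definition lefts (S : D -> Prop) (c : maxD D) : Prop := exists s, S s /\ c = maxleft s.

Lemma lefts_directed {S} : directed le S -> directed R (lefts S).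
Proof.
  intros [[s0 Hs0] Hdir]. split; [exists (maxleft s0), s0; auto|].
  intros c1 c2 [s1 [Hs1 ->]] [s2 [Hs2 ->]].
  destruct (Hdir s1 s2 Hs1 Hs2) as [s [Hs [H1 H2]]].
  exists (maxleft s). split; [exists s; auto|].
  split; [exact (proj1 (proj1 (le_iff _ _) H1)) | exact (proj1 (proj1 (le_iff _ _) H2))].
Qed.

Definition intervals (S : maxD D -> Prop) (d : maxD D) (w : D) : Prop :=
  exists c, S c /\ maxleft w = c /\ maxright w = d.

Lemma intervals_directed {S d} :
  directed R S -> (forall c, S c -> R c d) -> directed le (intervals S d).
Proof.
  intros [[c0 Hc0] Hdir] Hbound. split.
  - destruct (maxle_interval (Hbound c0 Hc0)) as [z [-> ->]]. exists z, (maxleft z). auto.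
  - intros w1 w2 [c1 [Hc1 [Hl1 Hr1]]] [c2 [Hc2 [Hl2 Hr2]]].
    destruct (Hdir c1 c2 Hc1 Hc2) as [c [Hc [H1 H2]]].
    destruct (maxle_interval (Hbound c Hc)) as [z [Hcz Hdz]].
    assert (Hbelow : forall w c', maxleft w = c' -> maxright w = d -> R c' c -> le w z).
    { intros w c' Hl Hr Hc'. apply le_iff. rewrite Hl, Hr, <- Hcz, <- Hdz.
      split; [exact Hc' | exact (poset_refl maxle_poset _)]. }
    exists z. split; [exists c; auto|].
    split; [exact (Hbelow _ _ Hl1 Hr1 H1) | exact (Hbelow _ _ Hl2 Hr2 H2)].
Qed.

Lemma intervals_lefts {S d} : (forall c, S c -> R c d) ->
  forall a, (exists w, intervals S d w /\ lf w = a) <-> (exists c, S c /\ proj1_sig c = a).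
Proof.
  intros Hbound a. split.
  - intros [w [[c [Hc [Hl _]]] <-]]. exists c. split; [exact Hc | rewrite <- Hl; reflexivity].
  - intros [c [Hc <-]]. destruct (maxle_interval (Hbound c Hc)) as [z [Hcz Hdz]].
    exists z. split; [exists c; auto | rewrite Hcz; reflexivity].
Qed.

(* By axiom (iii) the left endpoint of the supremum of the intervals [c, d], c in S,
   does not depend on the upper bound d. *)
Lemma maxle_bounded_sup {S d} :
  directed R S -> (forall c, S c -> R c d) -> exists e, is_sup R S e.
Proof.
  intros Hdir Hbound.
  assert (Hright : forall v s, intervals S v s -> rt s = proj1_sig v)
    by (intros v s [c [_ [_ <-]]]; reflexivity).
  destruct (idle_dcpo _ (intervals_directed Hdir Hbound)) as [w Hw].
  destruct (left_sup_of_right_constant (intervals_directed Hdir Hbound) (Hright d) Hw)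
    as [_ Hleft].
  exists (maxleft w). split.
  - intros c Hc. destruct (maxle_interval (Hbound c Hc)) as [z [Hcz Hdz]].
    rewrite Hcz. apply (le_iff z w). apply Hw. exists c; auto.
  - intros v Hv.
    destruct (idle_dcpo _ (intervals_directed Hdir Hv)) as [w' Hw'].
    destruct (left_sup_of_right_constant (intervals_directed Hdir Hv) (Hright v) Hw')
      as [Hw'v _].
    exists w'. simpl. split; [| symmetry; exact Hw'v].
    apply (Hleft _ _ _ (intervals_directed Hdir Hv) (Hright v)); [| exact Hw'].
    intros a. rewrite (intervals_lefts Hv a), (intervals_lefts Hbound a). reflexivity.
Qed.

(* The hypothesis on u is what a supremum in the subposet of elements with right
   endpoint rt u provides, as in axiom (ii). *)
Lemma lefts_sup {S u} : directed le S -> (forall s, S s -> le s u) ->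
  (forall w, rt w = rt u -> (forall s, S s -> le s w) -> le u w) ->
  is_sup R (lefts S) (maxleft u).
Proof.
  intros Hdir Hub Hleast.
  assert (Hlefts_ub : forall c, lefts S c -> R c (maxleft u))
    by (intros c [s [Hs ->]]; exact (proj1 (proj1 (le_iff s u) (Hub s Hs)))).
  split; [exact Hlefts_ub|]. intros v Hv.
  destruct (maxle_bounded_sup (lefts_directed Hdir) Hlefts_ub) as [e He].
  apply (poset_trans maxle_poset _ e); [| exact (proj2 He v Hv)].
  pose proof (poset_trans maxle_poset _ _ _ (proj2 He _ Hlefts_ub) (maxle_endpoints u))
    as Heu.
  destruct (maxle_interval Heu) as [w [-> Huw]].
  assert (Huw_le : le u w).
  { apply Hleast; [exact (f_equal (@proj1_sig _ _) (eq_sym Huw))|].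
    intros s Hs. apply le_iff. split.
    - apply (proj1 He). exists s; auto.
    - rewrite <- Huw. exact (proj2 (proj1 (le_iff s u) (Hub s Hs))). }
  exact (proj1 (proj1 (le_iff u w) Huw_le)).
Qed.

Lemma lefts_sup_of_sup {S u} :
  directed le S -> is_sup le S u -> is_sup R (lefts S) (maxleft u).
Proof.
  intros Hdir Hsup. apply (lefts_sup Hdir (proj1 Hsup)).
  intros w _ Hw. exact (proj2 Hsup w Hw).
Qed.

Lemma intervals_sup_in {S u} : is_sup R S u ->
  is_sup_in (fun w => rt w = proj1_sig u) le (intervals S u) (proj1_sig u).
Proof.
  intros [Hub Hleast]. split; [|split].
  - exact (right_max (proj2_sig u)).
  - intros w [c [Hc [Hl Hr]]]. apply le_max_iff. rewrite Hl, Hr.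
    split; [exact (Hub c Hc) | exact (poset_refl maxle_poset u)].
  - intros v Hv Hvub.
    assert (Hu : u = maxleft v).
    { apply (poset_antisym maxle_poset).
      - apply Hleast. intros c Hc. destruct (maxle_interval (Hub c Hc)) as [z [Hcz Huz]].
        rewrite Hcz. apply (le_iff z v). apply Hvub. exists c; auto.
      - replace u with (maxright v) by (apply maxD_eq; exact Hv).
        apply maxle_endpoints. }
    replace v with (proj1_sig u); [exact (poset_refl idle_poset _)|].
    apply endpoints_inj.
    + rewrite (left_max (proj2_sig u)), Hu. reflexivity.
    + rewrite (right_max (proj2_sig u)), Hv. reflexivity.
Qed.

Lemma way_below_endpoints_of_uuarrow z :
  (exists a, way_below le z a) -> way_below R (maxleft z) (maxright z).
Proof.
  intros Hz SM u Hdir Hsup Hzu.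
  destruct (maxle_interval (poset_trans maxle_poset _ _ _ (maxle_endpoints z) Hzu))
    as [y [Hzy ->]].
  assert (Hyz : le y z).
  { apply le_iff. rewrite <- Hzy. split; [exact (poset_refl maxle_poset _) | exact Hzu]. }
  assert (Hwb := proj1 (uuarrow_iff_way_below_right z) Hz y
                   (f_equal (@proj1_sig _ _) (eq_sym Hzy)) Hyz).
  destruct (Hwb (intervals SM (maxright y)) (rt y)) as [w [[c [Hc [Hwc _]]] Hyw]].
  - intros w [c [_ [_ Hw]]]. exact (f_equal (@proj1_sig _ _) Hw).
  - exact (intervals_directed Hdir (proj1 Hsup)).
  - exact (intervals_sup_in Hsup).
  - exact (poset_refl idle_poset _).
  - exists c. split; [exact Hc|]. rewrite Hzy, <- Hwc. exact (proj1 (proj1 (le_iff y w) Hyw)).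
Qed.

Lemma uuarrow_of_way_below_endpoints z :
  way_below R (maxleft z) (maxright z) -> exists a, way_below le z a.
Proof.
  intros Hz. apply uuarrow_iff_way_below_right.
  intros y Hyz_left Hyz S u Hright Hdir [_ [Hub Hleast]] Hyu.
  pose proof (is_max_right y u Hyu) as Hu. subst u.
  assert (Hsup : is_sup R (lefts S) (maxright y)).
  { replace (maxright y) with (maxleft (rt y))
      by (apply maxD_eq; exact (left_max (is_max_right y))).
    apply (lefts_sup Hdir Hub).
    intros w Hw. apply Hleast. rewrite Hw. exact (right_max (is_max_right y)). }
  destruct (Hz (lefts S) (maxright y) (lefts_directed Hdir) Hsup
              (proj2 (proj1 (le_iff y z) Hyz))) as [c [[s [Hs ->]] Hzs]].
  exists s. split; [exact Hs|]. apply le_iff.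
  replace (maxleft y) with (maxleft z) by (apply maxD_eq; exact (eq_sym Hyz_left)).
  replace (maxright s) with (maxright y) by (apply maxD_eq; exact (eq_sym (Hright s Hs))).
  split; [exact Hzs | exact (poset_refl maxle_poset _)].
Qed.

Lemma way_below_endpoints_iff z :
  way_below R (maxleft z) (maxright z) <-> exists a, way_below le z a.
Proof.
  split; [exact (uuarrow_of_way_below_endpoints z)
         | exact (way_below_endpoints_of_uuarrow z)].
Qed.

Lemma way_below_left_of_way_below {y} {p : maxD D} :
  way_below le y (proj1_sig p) -> way_below R (maxleft y) p.
Proof.
  intros Hyp.
  destruct (endpoint_meets y _ (proj2_sig p) (way_below_le idle_poset _ _ Hyp))
    as [[m [Hm [Hl Hr]]] _].
  replace (maxleft y) with (maxleft m) by (apply maxD_eq; exact Hl).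
  replace p with (maxright m) by (apply maxD_eq; exact Hr).
  apply way_below_endpoints_of_uuarrow.
  exact (left_meet_uuarrow (proj2_sig p) Hyp Hm).
Qed.

Lemma maxle_continuous : continuous_poset R.
Proof.
  split; [exact maxle_poset|]. exists (fun _ => True). intros x.
  pose proof (way_below_directed idle_poset idle_continuous (proj1_sig x)) as Hdir.
  exists (lefts (fun y => way_below le y (proj1_sig x))). split; [|split].
  - intros c [y [Hy ->]]. split; [exact I | exact (way_below_left_of_way_below Hy)].
  - exact (lefts_directed Hdir).
  - pose proof (lefts_sup_of_sup Hdir (way_below_sup idle_poset idle_continuous _)) as Hsup.
    rewrite maxleft_max in Hsup. exact Hsup.
Qed.

Lemma way_below_left_of_sup S u a : directed le S -> is_sup le S u ->
  way_below R a (maxleft u) -> exists s, S s /\ way_below R a (maxleft s).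
Proof.
  intros Hdir Hsup Hau.
  destruct (way_below_interpolate maxle_poset maxle_continuous Hau) as [c [Hac Hcu]].
  destruct (Hcu (lefts S) (maxleft u) (lefts_directed Hdir) (lefts_sup_of_sup Hdir Hsup)
              (poset_refl maxle_poset _)) as [c' [[s [Hs ->]] Hcs]].
  exists s. split; [exact Hs|].
  exact (way_below_mono maxle_poset _ _ _ _ (poset_refl maxle_poset _) Hac Hcs).
Qed.

End IntervalDomainFacts.

Lemma interval_domain_mirror (D : IntervalDomain) :
  interval_domain (idle D) (idright D) (idleft D).
Proof.
  destruct (id_ax D) as [[Hpos [Hmax [Hmeet [Hconcat Hends]]]]
                         [Hcd [Hi [Hii [Hiiil [Hiiir Hiv]]]]]].
  split; [|split; [exact Hcd|split; [|split; [|split; [exact Hiiir|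
    split; [exact Hiiil|exact Hiv]]]]]].
  - split; [exact Hpos|]. split; [intros x; exact (conj (proj2 (Hmax x)) (proj1 (Hmax x)))|].
    split; [intros x; exact (is_meet_sym (Hmeet x))|]. split.
    + intros x y Hxy. destruct (Hconcat y x (eq_sym Hxy)) as [m [Hm [Hl Hr]]].
      exists m. exact (conj (is_meet_sym Hm) (conj Hr Hl)).
    + intros x p Hp Hxp.
      destruct (Hends x p Hp Hxp) as [[m1 [Hm1 [Hl1 Hr1]]] [m2 [Hm2 [Hl2 Hr2]]]].
      split; [exists m2 | exists m1]; split; (apply is_meet_sym; assumption) || auto.
  - intros x p Hp Hxp. destruct (Hi x p Hp Hxp) as [Hleft Hright].
    split; intros m Hm; [apply Hright | apply Hleft]; exact (is_meet_sym Hm).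
  - intros x. specialize (Hii x). simpl in Hii |- *. tauto.
Qed.

Definition mirror (D : IntervalDomain) : IntervalDomain :=
  {| idT := D; idle := idle D; idleft := idright D; idright := idleft D;
     id_ax := interval_domain_mirror D |}.

Lemma maxle_mirror (D : IntervalDomain) : maxle (mirror D) = fun a b => maxle D b a.
Proof.
  apply functional_extensionality; intros a. apply functional_extensionality; intros b.
  apply propositional_extensionality.
  split; intros [z [Ha Hb]]; exists z; auto.
Qed.

Lemma maxleft_mirror (D : IntervalDomain) : maxleft (mirror D) = maxright D.
Proof. apply functional_extensionality. intros y. apply maxD_eq. reflexivity. Qed.

Lemma maxright_mirror (D : IntervalDomain) : maxright (mirror D) = maxleft D.
Proof. apply functional_extensionality. intros y. apply maxD_eq. reflexivity. Qed.

Section Bicontinuity.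
Variable D : IntervalDomain.
Local Notation le := (idle D).
Local Notation R := (maxle D).
Local Notation Rop := (fun a b : maxD D => maxle D b a).

Lemma way_below_endpoints_op_iff z :
  way_below Rop (maxright D z) (maxleft D z) <-> exists a, way_below le z a.
Proof.
  pose proof (way_below_endpoints_iff (mirror D) z) as Hz.
  rewrite maxle_mirror, maxleft_mirror, maxright_mirror in Hz. exact Hz.
Qed.

(* Both sides say that the interval [x, y] of D has something way above it. *)
Lemma way_below_maxle_iff (x y : maxD D) : way_below R x y <-> way_below Rop y x.
Proof.
  split; intros Hxy.
  - destruct (maxle_interval D (way_below_le (maxle_poset D) _ _ Hxy)) as [z [-> ->]].
    exact (proj2 (way_below_endpoints_op_iff z) (proj1 (way_below_endpoints_iff D z) Hxy)).
  - destruct (maxle_interval D (way_below_le (poset_flip (maxle_poset D)) _ _ Hxy))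
      as [z [-> ->]].
    exact (proj2 (way_below_endpoints_iff D z) (proj1 (way_below_endpoints_op_iff z) Hxy)).
Qed.

Lemma way_below_right_of_way_below {y} {p : maxD D} :
  way_below le y (proj1_sig p) -> way_below R p (maxright D y).
Proof.
  intros Hyp. pose proof (way_below_left_of_way_below (mirror D) Hyp) as H.
  rewrite maxle_mirror, maxleft_mirror in H. exact (proj2 (way_below_maxle_iff _ _) H).
Qed.

Lemma way_below_right_of_sup S u b : directed le S -> is_sup le S u ->
  way_below R (maxright D u) b -> exists s, S s /\ way_below R (maxright D s) b.
Proof.
  pose proof (way_below_left_of_sup (mirror D) S u b) as H.
  rewrite maxle_mirror, maxleft_mirror in H.
  intros Hdir Hsup Hub.
  destruct (H Hdir Hsup (proj1 (way_below_maxle_iff _ _) Hub)) as [s [Hs Hsb]].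
  exists s. exact (conj Hs (proj2 (way_below_maxle_iff _ _) Hsb)).
Qed.

Lemma uuarrow_maxle_filtered_inf x : filtered R (uuarrow R x) /\ is_inf R (uuarrow R x) x.
Proof.
  assert (Hop : continuous_poset Rop).
  { pose proof (maxle_continuous (mirror D)) as H. rewrite maxle_mirror in H. exact H. }
  replace (uuarrow R x) with (fun y => way_below Rop y x).
  - split; [exact (way_below_directed (poset_flip (maxle_poset D)) Hop x)
           | exact (way_below_sup (poset_flip (maxle_poset D)) Hop x)].
  - apply functional_extensionality. intros y.
    apply propositional_extensionality. symmetry. apply way_below_maxle_iff.
Qed.

End Bicontinuity.

Section IntervalTopology.
Variable D : IntervalDomain.
Local Notation le := (idle D).
Local Notation R := (maxle D).

Definition basic_within (U : maxD D -> Prop) (a b : maxD D) : Prop :=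
  forall w, way_below R a w -> way_below R w b -> U w.

(* Scott open, and meets max(D) in U when U is interval-open. *)
Definition scott_lift (U : maxD D -> Prop) (y : D) : Prop :=
  exists a b, basic_within U a b /\
    way_below R a (maxleft D y) /\ way_below R (maxright D y) b.

Lemma way_below_maxleft_mono {a y y'} :
  le y y' -> way_below R a (maxleft D y) -> way_below R a (maxleft D y').
Proof.
  intros Hyy' Ha. exact (way_below_mono (maxle_poset D) _ _ _ _
    (poset_refl (maxle_poset D) _) Ha (proj1 (proj1 (le_iff D y y') Hyy'))).
Qed.

Lemma way_below_maxright_mono {b y y'} :
  le y y' -> way_below R (maxright D y) b -> way_below R (maxright D y') b.
Proof.
  intros Hyy' Hb. exact (way_below_mono (maxle_poset D) _ _ _ _
    (proj2 (proj1 (le_iff D y y') Hyy')) Hb (poset_refl (maxle_poset D) _)).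
Qed.

Lemma scott_lift_open U : scott_open le (scott_lift U).
Proof.
  split.
  - intros y y' [a [b [Hab [Ha Hb]]]] Hyy'. exists a, b.
    split; [exact Hab|]. split.
    + exact (way_below_maxleft_mono Hyy' Ha).
    + exact (way_below_maxright_mono Hyy' Hb).
  - intros S u Hdir Hsup [a [b [Hab [Ha Hb]]]].
    destruct (way_below_left_of_sup D S u a Hdir Hsup Ha) as [s1 [Hs1 Ha1]].
    destruct (way_below_right_of_sup D S u b Hdir Hsup Hb) as [s2 [Hs2 Hb2]].
    destruct (proj2 Hdir s1 s2 Hs1 Hs2) as [s [Hs [H1 H2]]].
    exists s. split; [exact Hs|]. exists a, b. split; [exact Hab|]. split.
    + exact (way_below_maxleft_mono H1 Ha1).
    + exact (way_below_maxright_mono H2 Hb2).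
Qed.

Lemma scott_lift_max U (p : maxD D) : scott_lift U (proj1_sig p) -> U p.
Proof.
  intros [a [b [Hab [Ha Hb]]]]. rewrite maxleft_max in Ha. rewrite maxright_max in Hb.
  exact (Hab p Ha Hb).
Qed.

Lemma scott_lift_of_open U (p : maxD D) :
  interval_open R U -> U p -> scott_lift U (proj1_sig p).
Proof.
  intros HU Hp. destruct (HU p Hp) as [a [b [Ha [Hb Hab]]]].
  exists a, b. rewrite maxleft_max, maxright_max. auto.
Qed.

Lemma maxle_interval_compact a b :
  compact_in (interval_open R) (fun z => R a z /\ R z b).
Proof.
  intros I U HU Hcover.
  destruct (classic (R a b)) as [Hab|Hab].
  2:{ exists nil. intros z [Haz Hzb]. exfalso.
      exact (Hab (poset_trans (maxle_poset D) _ _ _ Haz Hzb)). }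
  destruct (maxle_interval D Hab) as [z0 [-> ->]].
  destruct (max_above_scott_compact D z0 I (fun i => scott_lift (U i))
              (fun i => scott_lift_open (U i))) as [l Hl].
  - intros y [Hy Hz0y].
    destruct (Hcover (exist _ y Hy) (proj1 (le_max_iff D z0 (exist _ y Hy)) Hz0y)) as [i Hi].
    exists i. exact (scott_lift_of_open (U i) (exist _ y Hy) (HU i) Hi).
  - exists l. intros p Hp.
    destruct (Hl (proj1_sig p) (conj (proj2_sig p) (proj2 (le_max_iff D z0 p) Hp)))
      as [i [Hil Hi]].
    exists i. exact (conj Hil (scott_lift_max (U i) p Hi)).
Qed.

End IntervalTopology.

Lemma maxle_globally_hyperbolic (D : IntervalDomain) : globally_hyperbolic (maxle D).
Proof.
  split; [|exact (maxle_interval_compact D)].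
  split; [exact (maxle_continuous D)|]. split.
  - exact (way_below_maxle_iff D).
  - exact (uuarrow_maxle_filtered_inf D).
Qed.

Section Restriction.
Variables (D E : IntervalDomain) (f : D -> E).

Lemma preserves_max : (forall x, f (idleft D x) = idleft E (f x)) ->
  forall x, is_max (idle D) x -> is_max (idle E) (f x).
Proof. intros Hleft x Hx. rewrite <- (left_max D Hx), Hleft. apply is_max_left. Qed.

Variable Hm : forall x, is_max (idle D) x -> is_max (idle E) (f x).

Lemma restr_monotone : (forall x, f (idleft D x) = idleft E (f x)) ->
  (forall x, f (idright D x) = idright E (f x)) ->
  monotone (maxle D) (maxle E) (restr f Hm).
Proof.
  intros Hleft Hright a b [z [Ha Hb]]. exists (f z). simpl.
  rewrite Ha, Hb, Hleft, Hright. auto.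
Qed.

(* The preimage of a Scott lift is Scott open, hence contains an approximant y of
   each of its maximal points, and the basic set between the endpoints of y lies in
   the preimage. *)
Lemma restr_interval_continuous :
  continuous_map (scott_open (idle D)) (scott_open (idle E)) f ->
  continuous_map (interval_open (maxle D)) (interval_open (maxle E)) (restr f Hm).
Proof.
  intros Hf V HV z Hz.
  pose proof (Hf _ (scott_lift_open E V)) as [Hupper Hinacc].
  destruct (Hinacc _ _ (way_below_directed (idle_poset D) (idle_continuous D) (proj1_sig z))
              (way_below_sup (idle_poset D) (idle_continuous D) _)
              (scott_lift_of_open E V (restr f Hm z) HV Hz)) as [y [Hyz Hy]].
  exists (maxleft D y), (maxright D y).
  split; [exact (way_below_left_of_way_below D Hyz)|].
  split; [exact (way_below_right_of_way_below D Hyz)|].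
  intros w Hyw Hwy. apply (scott_lift_max E V (restr f Hm w)). apply (Hupper y); [exact Hy|].
  apply le_max_iff. split; apply (way_below_le (maxle_poset D)); assumption.
Qed.

End Restriction.

Theorem mainTheorem15 :
  (* on objects: (max D, ≤) is a globally hyperbolic poset *)
  (forall D : IntervalDomain, globally_hyperbolic (maxle D)) /\
  (* on arrows: f maps max(D) into max(E) ... *)
  (forall (D E : IntervalDomain) (f : D -> E), IN_arrow D E f ->
     forall x, is_max (idle D) x -> is_max (idle E) (f x)) /\
  (* ... and its restriction is an arrow of G *)
  (forall (D E : IntervalDomain) (f : D -> E) (Hf : IN_arrow D E f)
     (Hm : forall x, is_max (idle D) x -> is_max (idle E) (f x)),
     G_arrow (maxle D) (maxle E) (restr f Hm)) /\
  (* preservation of identities *)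
  (forall (D : IntervalDomain)
     (Hm : forall x, is_max (idle D) x -> is_max (idle D) ((fun y : D => y) x)),
     restr (fun y : D => y) Hm = (fun a => a)) /\
  (* preservation of composition *)
  (forall (D E F : IntervalDomain) (f : D -> E) (g : E -> F),
     IN_arrow D E f -> IN_arrow E F g ->
     forall (Hf : forall x, is_max (idle D) x -> is_max (idle E) (f x))
            (Hg : forall x, is_max (idle E) x -> is_max (idle F) (g x))
            (Hgf : forall x, is_max (idle D) x -> is_max (idle F) (g (f x))),
     restr (fun x => g (f x)) Hgf = (fun a => restr g Hg (restr f Hf a))).
Proof.
  split; [|split; [|split; [|split]]].
  - exact maxle_globally_hyperbolic.
  - intros D E f [_ [Hleft _]]. exact (preserves_max D E f Hleft).
  - intros D E f [Hscott [Hleft Hright]] Hm. split.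
    + exact (restr_monotone D E f Hm Hleft Hright).
    + exact (restr_interval_continuous D E f Hm Hscott).
  - intros D Hm. apply functional_extensionality. intros a. apply maxD_eq. reflexivity.
  - intros D E F f g _ _ Hf Hg Hgf. apply functional_extensionality. intros a.
    apply maxD_eq. reflexivity.
Qed.
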